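(* Let $X$ be a Tychonoff space with $|X|>1$. Then $\mathrm{Rad}(\mathbb{AG}(X))=1$ if $|X|=2$; $\mathrm{Rad}(\mathbb{AG}(X))=2$ if $|X|>2$ and $X$ has an isolated point; and $\mathrm{Rad}(\mathbb{AG}(X))=3$ if $|X|>2$ and $X$ has no isolated point.
   Context: $C(X)$ is the ring of real-valued continuous functions on $X$. $\mathbb{A}(X)$ is the set of nonzero ideals $I$ of $C(X)$ for which there is a nonzero ideal $J$ with $IJ=\{0\}$; $\mathbb{AG}(X)$ has vertex set $\mathbb{A}(X)$, distinct $I,J$ adjacent iff $IJ=\{0\}$. The eccentricity of a vertex is the maximum distance from it to other vertices, and the radius $\mathrm{Rad}$ is the minimum eccentricity over all vertices. *)

From Stdlib Require Import Reals List Arith.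
Import ListNotations.
Open Scope R_scope.

Record topology (X : Type) := {
  is_open : (X -> Prop) -> Prop;
  open_full : is_open (fun _ => True);
  open_union : forall F : (X -> Prop) -> Prop,
      (forall U, F U -> is_open U) -> is_open (fun x => exists U, F U /\ U x);
  open_inter : forall U V, is_open U -> is_open V -> is_open (fun x => U x /\ V x)
}.
Arguments is_open {X} t U.

Definition is_closed {X} (T : topology X) (F : X -> Prop) : Prop :=
  is_open T (fun x => ~ F x).

Definition R_open (V : R -> Prop) : Prop :=
  forall y, V y -> exists eps, eps > 0 /\ forall z, Rabs (z - y) < eps -> V z.

Definition continuous_on {X} (T : topology X) (f : X -> R) : Prop :=
  forall V, R_open V -> is_open T (fun x => V (f x)).

Definition T1 {X} (T : topology X) : Prop :=
  forall x : X, is_closed T (fun y => y = x).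

Definition completely_regular {X} (T : topology X) : Prop :=
  forall (F : X -> Prop) (x : X), is_closed T F -> ~ F x ->
    exists f : X -> R, continuous_on T f /\ (forall y, 0 <= f y <= 1) /\
      f x = 0 /\ (forall y, F y -> f y = 1).

Definition tychonoff {X} (T : topology X) : Prop := T1 T /\ completely_regular T.

Definition isolated_point {X} (T : topology X) (x : X) : Prop :=
  is_open T (fun y => y = x).

Definition is_ideal {X} (T : topology X) (I : (X -> R) -> Prop) : Prop :=
  (forall f, I f -> continuous_on T f) /\
  I (fun _ => 0) /\
  (forall f g, I f -> I g -> I (fun x => f x + g x)) /\
  (forall f g, continuous_on T g -> I f -> I (fun x => g x * f x)).

Definition nonzero_ideal {X} (T : topology X) (I : (X -> R) -> Prop) : Prop :=
  is_ideal T I /\ exists f, I f /\ exists x, f x <> 0.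

(** The product ideal IJ: finite sums of products f g with f in I, g in J. *)
Definition ideal_prod {X} (I J : (X -> R) -> Prop) (h : X -> R) : Prop :=
  exists l : list ((X -> R) * (X -> R)),
    Forall (fun p => I (fst p) /\ J (snd p)) l /\
    forall x, h x = fold_right (fun p acc => fst p x * snd p x + acc) 0 l.

Definition prod_zero {X} (I J : (X -> R) -> Prop) : Prop :=
  forall h, ideal_prod I J h -> forall x, h x = 0.

Definition ideal_eq {X} (I J : (X -> R) -> Prop) : Prop := forall f, I f <-> J f.

Definition AG_vertex {X} (T : topology X) (I : (X -> R) -> Prop) : Prop :=
  nonzero_ideal T I /\ exists J, nonzero_ideal T J /\ prod_zero I J.

Definition AG_adj {X} (T : topology X) (I J : (X -> R) -> Prop) : Prop :=
  AG_vertex T I /\ AG_vertex T J /\ ~ ideal_eq I J /\ prod_zero I J.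

Fixpoint AG_walk {X} (T : topology X) (n : nat) (I J : (X -> R) -> Prop) : Prop :=
  match n with
  | O => AG_vertex T I /\ ideal_eq I J
  | S m => exists K, AG_adj T I K /\ AG_walk T m K J
  end.

Definition AG_dist {X} (T : topology X) (I J : (X -> R) -> Prop) (n : nat) : Prop :=
  AG_walk T n I J /\ forall m, (m < n)%nat -> ~ AG_walk T m I J.

Definition AG_ecc {X} (T : topology X) (I : (X -> R) -> Prop) (k : nat) : Prop :=
  (forall J, AG_vertex T J -> exists m, (m <= k)%nat /\ AG_dist T I J m) /\
  (exists J, AG_vertex T J /\ AG_dist T I J k).

Definition AG_rad {X} (T : topology X) (r : nat) : Prop :=
  (exists I, AG_vertex T I /\ AG_ecc T I r) /\
  (forall I k, AG_vertex T I -> AG_ecc T I k -> (r <= k)%nat).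

Definition card_eq2 (X : Type) : Prop :=
  exists a b : X, a <> b /\ forall x, x = a \/ x = b.
Definition card_gt2 (X : Type) : Prop :=
  exists a b c : X, a <> b /\ a <> c /\ b <> c.

From Stdlib Require Import Reals Lra Lia List Classical FunctionalExtensionality PropExtensionality ClassicalEpsilon.
Import ListNotations.
Open Scope R_scope.

(* The ideals of functions vanishing wherever a continuous G is nonpositive are
   vertices as soon as G changes sign, and complete regularity supplies enough such G.
   Any two vertices I, J are joined by a walk of length at most 3: through a common
   annihilator I' /\ J' if it is nonzero, and along I - I' - J' - J otherwise.
   For an isolated point x0 the point ideal of functions supported in {x0} reaches every
   vertex within 2 steps (directly, or through an annihilator vanishing at x0); when
   |X| = 2 the two point ideals are the only vertices and are adjacent.  Conversely, when
   |X| > 2 each vertex I has a vertex J with J <> I and IJ <> 0, and when no point is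
   isolated J can also be chosen without a nonzero common annihilator, which rules out
   distance 2. *)

Section AnnihilatingIdealGraph.
Context {X : Type} (T : topology X).

Lemma open_ext (P Q : X -> Prop) : (forall x, P x <-> Q x) -> is_open T P -> is_open T Q.
Proof.
  intros HPQ. replace Q with P; [easy|].
  extensionality x. apply propositional_extensionality, HPQ.
Qed.

Lemma open_empty : is_open T (fun _ => False).
Proof.
  apply (open_ext (fun x => exists U, False /\ U x)).
  - firstorder.
  - apply (open_union _ T (fun _ => False)); tauto.
Qed.

Lemma continuous_const (c : R) : continuous_on T (fun _ => c).
Proof.
  intros V _. destruct (classic (V c)) as [Vc|Vc].
  - apply (open_ext (fun _ => True)); [tauto | apply open_full].
  - apply (open_ext (fun _ => False)); [tauto | apply open_empty].
Qed.

Lemma R_open_ball (a e : R) : R_open (fun z => Rabs (z - a) < e).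
Proof.
  intros y Hy. exists (e - Rabs (y - a)). split; [lra|].
  intros z Hz. pose proof (Rabs_triang (z - y) (y - a)).
  replace (z - y + (y - a)) with (z - a) in * by ring. lra.
Qed.

(* The preimage of V under f + g is the union of the boxes
   f^-1(ball a d) /\ g^-1(ball b d) whose image under + lies in V. *)
Lemma continuous_plus (f g : X -> R) :
  continuous_on T f -> continuous_on T g -> continuous_on T (fun x => f x + g x).
Proof.
  intros Hf Hg V HV.
  set (box := fun U : X -> Prop => exists a b d,
     (forall u v, Rabs (u - a) < d -> Rabs (v - b) < d -> V (u + v)) /\
     U = (fun x => Rabs (f x - a) < d /\ Rabs (g x - b) < d)).
  apply (open_ext (fun x => exists U, box U /\ U x)).
  - intros x; split.
    + intros [U [[a [b [d [HU ->]]]] [Ha Hb]]]. auto.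
    + intros Hx. destruct (HV _ Hx) as [e [He HVe]].
      exists (fun y => Rabs (f y - f x) < e / 2 /\ Rabs (g y - g x) < e / 2). split.
      * exists (f x), (g x), (e / 2). split; [|reflexivity].
        intros u v Hu Hv. apply HVe.
        pose proof (Rabs_triang (u - f x) (v - g x)).
        replace (u - f x + (v - g x)) with (u + v - (f x + g x)) in * by ring. lra.
      * rewrite !Rminus_diag, Rabs_R0. lra.
  - apply open_union. intros U [a [b [d [_ ->]]]].
    apply open_inter; [apply (Hf (fun z => Rabs (z - a) < d)) | apply (Hg (fun z => Rabs (z - b) < d))];
      apply R_open_ball.
Qed.

Lemma continuous_comp (phi : R -> R) (f : X -> R) :
  continuity phi -> continuous_on T f -> continuous_on T (fun x => phi (f x)).
Proof.
  intros Hphi Hf V HV. apply (Hf (fun t => V (phi t))).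
  intros y Hy. destruct (HV _ Hy) as [e [He HVe]].
  destruct (Hphi y e He) as [d [Hd Hphid]].
  exists d. split; [exact Hd|]. intros z Hz. apply HVe.
  destruct (Req_dec y z) as [<-|Hyz].
  - rewrite Rminus_diag, Rabs_R0. exact He.
  - apply (Hphid z). repeat split; auto.
Qed.

(* Polarization: f g = ((f + g)^2 - (f - g)^2) / 4. *)
Lemma continuous_mult (f g : X -> R) :
  continuous_on T f -> continuous_on T g -> continuous_on T (fun x => f x * g x).
Proof.
  intros Hf Hg.
  replace (fun x => f x * g x) with (fun x => / 4 * ((f x + g x) * (f x + g x)) +
      - / 4 * ((f x + - g x) * (f x + - g x))) by (extensionality x; field).
  assert (Hopp : continuous_on T (fun x => - g x)).
  { apply (continuous_comp (fun t => - t)); [reg | exact Hg]. }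
  apply continuous_plus;
    [apply (continuous_comp (fun t => / 4 * (t * t))) | apply (continuous_comp (fun t => - / 4 * (t * t)))];
    try reg; apply continuous_plus; assumption.
Qed.

Lemma ideal_eq_sym (I J : (X -> R) -> Prop) : ideal_eq I J -> ideal_eq J I.
Proof. intros E f. symmetry. apply E. Qed.

Lemma ideal_eq_trans (I J K : (X -> R) -> Prop) : ideal_eq I J -> ideal_eq J K -> ideal_eq I K.
Proof. intros E1 E2 f. rewrite (E1 f). apply E2. Qed.

Lemma prod_zero_pointwise (I J : (X -> R) -> Prop) f g :
  prod_zero I J -> I f -> J g -> forall x, f x * g x = 0.
Proof.
  intros HIJ Hf Hg. apply (HIJ (fun x => f x * g x)).
  exists [(f, g)]. split; [constructor; auto | intros x; simpl; ring].
Qed.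

Lemma prod_zero_of_pointwise (I J : (X -> R) -> Prop) :
  (forall f g, I f -> J g -> forall x, f x * g x = 0) -> prod_zero I J.
Proof.
  intros H h [l [Hl Hh]] x. rewrite Hh. clear h Hh.
  induction Hl as [|[f g] l [Hf Hg] _ IH]; simpl; [reflexivity|].
  rewrite IH, (H f g Hf Hg). ring.
Qed.

Lemma prod_zero_sym (I J : (X -> R) -> Prop) : prod_zero I J -> prod_zero J I.
Proof.
  intros HIJ. apply prod_zero_of_pointwise. intros f g Hf Hg x.
  rewrite Rmult_comm. exact (prod_zero_pointwise I J g f HIJ Hg Hf x).
Qed.

Lemma prod_zero_eq_r (I J J' : (X -> R) -> Prop) :
  ideal_eq J J' -> prod_zero I J -> prod_zero I J'.
Proof.
  intros E HIJ. apply prod_zero_of_pointwise. intros f g Hf Hg.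
  apply (prod_zero_pointwise I J); [exact HIJ | exact Hf | apply E, Hg].
Qed.

Lemma annihilated_vanish (I K : (X -> R) -> Prop) f k y :
  prod_zero I K -> K k -> k y <> 0 -> I f -> f y = 0.
Proof.
  intros HIK Hk Hky Hf.
  destruct (Rmult_integral _ _ (prod_zero_pointwise I K f k HIK Hf Hk y)); tauto.
Qed.

Lemma self_prod_nonzero (I : (X -> R) -> Prop) : nonzero_ideal T I -> ~ prod_zero I I.
Proof.
  intros [_ [f [Hf [x Hx]]]] HII. apply Hx.
  pose proof (prod_zero_pointwise I I f f HII Hf Hf x). nra.
Qed.

Lemma prod_zero_neq (I J : (X -> R) -> Prop) :
  nonzero_ideal T I -> prod_zero I J -> ~ ideal_eq I J.
Proof.
  intros HI HIJ E. apply (self_prod_nonzero I HI).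
  exact (prod_zero_eq_r I J I (ideal_eq_sym I J E) HIJ).
Qed.

Lemma annihilator_vertex (I J : (X -> R) -> Prop) :
  nonzero_ideal T I -> nonzero_ideal T J -> prod_zero I J -> AG_vertex T J.
Proof.
  intros HI HJ HIJ. split; [exact HJ|]. exists I. split; [exact HI | apply prod_zero_sym, HIJ].
Qed.

Lemma vertex_vanishes_somewhere (I : (X -> R) -> Prop) :
  AG_vertex T I -> exists y, forall f, I f -> f y = 0.
Proof.
  intros [_ [K [[_ [k [Hk [y Hy]]]] HIK]]]. exists y. intros f Hf.
  exact (annihilated_vanish I K f k y HIK Hk Hy Hf).
Qed.

Lemma ideal_neq_witness (I J : (X -> R) -> Prop) g y :
  (forall f, I f -> f y = 0) -> J g -> g y <> 0 -> ~ ideal_eq I J.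
Proof. intros HI Hg Hgy E. apply Hgy, HI, E, Hg. Qed.

Lemma ideal_continuous (I : (X -> R) -> Prop) f : is_ideal T I -> I f -> continuous_on T f.
Proof. intros [HI _]. apply HI. Qed.

Lemma ideal_mul (I : (X -> R) -> Prop) f g :
  is_ideal T I -> continuous_on T g -> I f -> I (fun x => g x * f x).
Proof. intros [_ [_ [_ HI]]]. apply HI. Qed.

Definition ideal_inter (I J : (X -> R) -> Prop) (f : X -> R) : Prop := I f /\ J f.

Lemma ideal_inter_is_ideal (I J : (X -> R) -> Prop) :
  is_ideal T I -> is_ideal T J -> is_ideal T (ideal_inter I J).
Proof.
  intros [I1 [I2 [I3 I4]]] [J1 [J2 [J3 J4]]]. split; [|split; [|split]].
  - intros f [Hf _]. exact (I1 f Hf).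
  - split; assumption.
  - intros f g [HIf HJf] [HIg HJg]. split; auto.
  - intros f g Hg [HIf HJf]. split; auto.
Qed.

Definition vanish_ideal (G : X -> R) (f : X -> R) : Prop :=
  continuous_on T f /\ forall x, G x <= 0 -> f x = 0.

Definition pos_part (t : R) : R := (t + Rabs t) / 2.

Lemma pos_part_pos t : 0 < t -> pos_part t = t.
Proof. intros Ht. unfold pos_part. rewrite Rabs_pos_eq; lra. Qed.

Lemma pos_part_nonpos t : t <= 0 -> pos_part t = 0.
Proof. intros Ht. unfold pos_part. rewrite Rabs_left1; lra. Qed.

Lemma vanish_ideal_is_ideal (G : X -> R) : is_ideal T (vanish_ideal G).
Proof.
  split; [|split; [|split]].
  - intros f [Hf _]. exact Hf.
  - split; [apply continuous_const | intros; reflexivity].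
  - intros f g [Hf Hf0] [Hg Hg0]. split; [apply continuous_plus; assumption|].
    intros x Hx. rewrite Hf0, Hg0 by exact Hx. ring.
  - intros f g Hg [Hf Hf0]. split; [apply continuous_mult; assumption|].
    intros x Hx. rewrite Hf0 by exact Hx. ring.
Qed.

Lemma vanish_ideal_pos_part (G : X -> R) :
  continuous_on T G -> vanish_ideal G (fun x => pos_part (G x)).
Proof.
  intros HG. split; [apply (continuous_comp pos_part); [unfold pos_part; reg | exact HG]|].
  intros x. apply pos_part_nonpos.
Qed.

Lemma vanish_ideal_opp_annihilate (G : X -> R) :
  prod_zero (vanish_ideal G) (vanish_ideal (fun x => - G x)).
Proof.
  apply prod_zero_of_pointwise. intros f g [_ Hf] [_ Hg] x.
  destruct (Rle_dec (G x) 0) as [Hx|Hx]; [rewrite Hf | rewrite Hg]; (ring || lra).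
Qed.

Lemma vanish_ideal_nonzero (G : X -> R) y :
  continuous_on T G -> 0 < G y -> nonzero_ideal T (vanish_ideal G).
Proof.
  intros HG Hy. split; [apply vanish_ideal_is_ideal|].
  exists (fun x => pos_part (G x)). split; [apply vanish_ideal_pos_part, HG|].
  exists y. rewrite pos_part_pos; lra.
Qed.

Lemma vanish_ideal_vertex (G : X -> R) y z :
  continuous_on T G -> 0 < G y -> G z < 0 -> AG_vertex T (vanish_ideal G).
Proof.
  intros HG Hy Hz. split; [exact (vanish_ideal_nonzero G y HG Hy)|].
  exists (vanish_ideal (fun x => - G x)). split; [|apply vanish_ideal_opp_annihilate].
  apply (vanish_ideal_nonzero _ z); [apply (continuous_comp Ropp); [reg | exact HG] | lra].
Qed.

Definition indicator (x0 y : X) : R := if excluded_middle_informative (y = x0) then 1 else 0.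

Lemma continuous_indicator x0 : T1 T -> isolated_point T x0 -> continuous_on T (indicator x0).
Proof.
  intros HT1 Hiso V _. unfold indicator.
  destruct (classic (V 1)), (classic (V 0)).
  1: apply (open_ext (fun _ => True)); [|apply open_full].
  2: apply (open_ext (fun y => y = x0)); [|exact Hiso].
  3: apply (open_ext (fun y => ~ y = x0)); [|exact (HT1 x0)].
  4: apply (open_ext (fun _ => False)); [|apply open_empty].
  all: intros y; destruct (excluded_middle_informative (y = x0)); tauto.
Qed.

Definition point_ideal (x0 : X) : (X -> R) -> Prop :=
  vanish_ideal (fun y => indicator x0 y - / 2).

Lemma point_idealP x0 f :
  point_ideal x0 f <-> continuous_on T f /\ forall y, y <> x0 -> f y = 0.
Proof.
  unfold point_ideal, vanish_ideal, indicator.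
  split; intros [Hf Hf0]; split; try exact Hf; intros y Hy; apply Hf0;
    destruct (excluded_middle_informative (y = x0)); (lra || tauto).
Qed.

Lemma point_ideal_vertex x0 b :
  T1 T -> isolated_point T x0 -> b <> x0 -> AG_vertex T (point_ideal x0).
Proof.
  intros HT1 Hiso Hb. apply (vanish_ideal_vertex _ x0 b).
  - apply continuous_plus; [apply continuous_indicator; assumption | apply continuous_const].
  - unfold indicator. destruct (excluded_middle_informative (x0 = x0)); [lra | tauto].
  - unfold indicator. destruct (excluded_middle_informative (b = x0)); [tauto | lra].
Qed.

(* The reverse inclusion holds because u = (u x0 / f x0) f for every u vanishing off x0. *)
Lemma point_ideal_unique (J : (X -> R) -> Prop) x0 f :
  is_ideal T J -> J f -> f x0 <> 0 -> (forall g y, J g -> y <> x0 -> g y = 0) ->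
  ideal_eq J (point_ideal x0).
Proof.
  intros HJ Hf Hfx0 Hoff u. rewrite point_idealP. split.
  - intros Hu. split; [exact (ideal_continuous J u HJ Hu)|]. intros y Hy. exact (Hoff u y Hu Hy).
  - intros [_ Hu].
    replace u with (fun x => u x0 / f x0 * f x).
    + apply (ideal_mul J f (fun _ => u x0 / f x0) HJ); [apply continuous_const | exact Hf].
    + extensionality x. destruct (classic (x = x0)) as [->|Hx].
      * field. exact Hfx0.
      * rewrite (Hoff f x Hf Hx), (Hu x Hx). ring.
Qed.

Lemma walk_refl (I : (X -> R) -> Prop) : AG_vertex T I -> AG_walk T 0 I I.
Proof. intros HI. split; [exact HI | intros f; tauto]. Qed.

Lemma walk_step n (I K J : (X -> R) -> Prop) :
  AG_vertex T I -> AG_vertex T K -> prod_zero I K -> AG_walk T n K J -> AG_walk T (S n) I J.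
Proof.
  intros HI HK HIK HKJ. exists K. split; [|exact HKJ].
  exact (conj HI (conj HK (conj (prod_zero_neq I K (proj1 HI) HIK) HIK))).
Qed.

Lemma walk_shortest n (I J : (X -> R) -> Prop) :
  AG_walk T n I J -> exists m, (m <= n)%nat /\ AG_dist T I J m.
Proof.
  induction n as [n IH] using (well_founded_induction Wf_nat.lt_wf). intros Hn.
  destruct (classic (exists m, (m < n)%nat /\ AG_walk T m I J)) as [[m [Hmn Hm]]|Hno].
  - destruct (IH m Hmn Hm) as [k [Hkm Hk]]. exists k. split; [lia | exact Hk].
  - exists n. split; [lia|]. split; [exact Hn|]. intros m Hmn Hm. apply Hno; eauto.
Qed.

Lemma AG_rad_intro (r : nat) :
  (exists I0, AG_vertex T I0 /\
     forall J, AG_vertex T J -> exists n, (n <= r)%nat /\ AG_walk T n I0 J) ->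
  (forall I, AG_vertex T I ->
     exists J, AG_vertex T J /\ forall m, (m < r)%nat -> ~ AG_walk T m I J) ->
  AG_rad T r.
Proof.
  intros [I0 [HI0 Hnear]] Hfar. split.
  - exists I0. split; [exact HI0|]. split.
    + intros J HJ. destruct (Hnear J HJ) as [n [Hn Hwalk]].
      destruct (walk_shortest n I0 J Hwalk) as [m [Hm Hdist]]. exists m. split; [lia | exact Hdist].
    + destruct (Hfar I0 HI0) as [J [HJ HJfar]]. exists J. split; [exact HJ|].
      destruct (Hnear J HJ) as [n [Hn Hwalk]].
      destruct (walk_shortest n I0 J Hwalk) as [m [Hm Hdist]].
      replace r with m; [exact Hdist|].
      destruct (Nat.lt_ge_cases m r) as [Hlt|]; [exfalso; exact (HJfar m Hlt (proj1 Hdist)) | lia].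
  - intros I k HI [Hecc _]. destruct (Hfar I HI) as [J [HJ HJfar]].
    destruct (Hecc J HJ) as [m [Hmk [Hwalk _]]].
    destruct (Nat.lt_ge_cases m r) as [Hlt|]; [exfalso; exact (HJfar m Hlt Hwalk) | lia].
Qed.

Lemma walk1_prod_zero (I J : (X -> R) -> Prop) : AG_walk T 1 I J -> prod_zero I J.
Proof.
  intros [K [[_ [_ [_ HIK]]] [_ E]]]. exact (prod_zero_eq_r I K J E HIK).
Qed.

Lemma walk2_common_annihilator (I J : (X -> R) -> Prop) : AG_walk T 2 I J ->
  exists K, nonzero_ideal T K /\ prod_zero I K /\ prod_zero K J.
Proof.
  intros [K [[_ [[HK _] [_ HIK]]] [K' [[_ [_ [_ HKK']]] [_ E]]]]].
  exists K. split; [exact HK|]. split; [exact HIK | exact (prod_zero_eq_r K K' J E HKK')].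
Qed.

Lemma no_short_walk_lt2 (I J : (X -> R) -> Prop) :
  ~ ideal_eq I J -> ~ prod_zero I J -> forall m, (m < 2)%nat -> ~ AG_walk T m I J.
Proof.
  intros Hneq Hnz [|[|m]] Hm Hwalk; [apply Hneq, Hwalk | apply Hnz, walk1_prod_zero, Hwalk | lia].
Qed.

Lemma no_short_walk_lt3 (I J : (X -> R) -> Prop) :
  ~ ideal_eq I J -> ~ prod_zero I J ->
  (forall L, nonzero_ideal T L -> prod_zero I L -> prod_zero L J -> False) ->
  forall m, (m < 3)%nat -> ~ AG_walk T m I J.
Proof.
  intros Hneq Hnz Hnocommon [|[|[|m]]] Hm Hwalk.
  1-2: refine (no_short_walk_lt2 I J Hneq Hnz _ _ Hwalk); lia.
  - destruct (walk2_common_annihilator I J Hwalk) as [L [HL [HIL HLJ]]].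
    exact (Hnocommon L HL HIL HLJ).
  - lia.
Qed.

(** * Upper bounds on distances *)

Lemma walk2_of_common_annihilator (I L J : (X -> R) -> Prop) :
  AG_vertex T I -> AG_vertex T J -> nonzero_ideal T L -> prod_zero I L -> prod_zero L J ->
  AG_walk T 2 I J.
Proof.
  intros HI HJ HL HIL HLJ.
  apply (walk_step 1 I L J HI (annihilator_vertex I L (proj1 HI) HL HIL) HIL).
  apply (walk_step 0 L J J (annihilator_vertex I L (proj1 HI) HL HIL) HJ HLJ), walk_refl, HJ.
Qed.

Lemma walk_le3 (I J : (X -> R) -> Prop) :
  AG_vertex T I -> AG_vertex T J -> exists n, (n <= 3)%nat /\ AG_walk T n I J.
Proof.
  intros HI HJ.
  pose proof HI as [HInz [I' [HI'nz HII']]]. pose proof HJ as [HJnz [J' [HJ'nz HJJ']]].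
  pose proof (annihilator_vertex I I' HInz HI'nz HII') as HI'.
  pose proof (annihilator_vertex J J' HJnz HJ'nz HJJ') as HJ'.
  pose proof (ideal_inter_is_ideal I' J' (proj1 HI'nz) (proj1 HJ'nz)) as Hinter.
  destruct (classic (exists f, ideal_inter I' J' f /\ exists x, f x <> 0)) as [Hnz|Hzero].
  - exists 2%nat. split; [lia|].
    apply (walk2_of_common_annihilator I (ideal_inter I' J') J HI HJ (conj Hinter Hnz)).
    + apply prod_zero_of_pointwise. intros f g Hf [Hg _]. exact (prod_zero_pointwise I I' f g HII' Hf Hg).
    + apply prod_zero_sym, prod_zero_of_pointwise. intros f g Hf [_ Hg].
      exact (prod_zero_pointwise J J' f g HJJ' Hf Hg).
  - assert (HI'J' : prod_zero I' J').
    { apply prod_zero_of_pointwise. intros f g Hf Hg x.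
      apply NNPP. intros Hx. apply Hzero. exists (fun x => f x * g x). split; [|eauto].
      split.
      - replace (fun x => f x * g x) with (fun x => g x * f x) by (extensionality y; ring).
        exact (ideal_mul I' f g (proj1 HI'nz) (ideal_continuous J' g (proj1 HJ'nz) Hg) Hf).
      - exact (ideal_mul J' g f (proj1 HJ'nz) (ideal_continuous I' f (proj1 HI'nz) Hf) Hg). }
    exists 3%nat. split; [lia|].
    apply (walk_step 2 I I' J HI HI' HII'), (walk_step 1 I' J' J HI' HJ' HI'J').
    apply (walk_step 0 J' J J HJ' HJ (prod_zero_sym _ _ HJJ')), walk_refl, HJ.
Qed.

Lemma walk_le2_point_ideal x0 b (J : (X -> R) -> Prop) :
  T1 T -> isolated_point T x0 -> b <> x0 -> AG_vertex T J ->
  exists n, (n <= 2)%nat /\ AG_walk T n (point_ideal x0) J.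
Proof.
  intros HT1 Hiso Hb HJ. pose proof (point_ideal_vertex x0 b HT1 Hiso Hb) as HE.
  assert (Hoff : forall u y, point_ideal x0 u -> y <> x0 -> u y = 0)
    by (intros u y Hu; apply point_idealP, Hu).
  assert (HEK : forall K : (X -> R) -> Prop, (forall k, K k -> k x0 = 0) -> prod_zero (point_ideal x0) K).
  { intros K HK. apply prod_zero_of_pointwise. intros u k Hu Hk y.
    destruct (classic (y = x0)) as [->|Hy]; [rewrite (HK k Hk) | rewrite (Hoff u y Hu Hy)]; ring. }
  destruct (classic (exists f, J f /\ f x0 <> 0)) as [[f [Hf Hfx0]]|Hno].
  -     pose proof HJ as [_ [K [HKnz HJK]]].
    exists 2%nat. split; [lia|].
    apply (walk2_of_common_annihilator _ K J HE HJ HKnz); [|apply prod_zero_sym, HJK].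
    apply HEK. intros k Hk. exact (annihilated_vanish K J k f x0 (prod_zero_sym _ _ HJK) Hf Hfx0 Hk).
  - exists 1%nat. split; [lia|].
    apply (walk_step 0 _ J J HE HJ); [|apply walk_refl, HJ].
    apply HEK. intros g Hg. apply NNPP. intros Hgx0. eauto.
Qed.


(** * Lower bounds on eccentricities *)

Lemma tychonoff_separate r p q : tychonoff T -> r <> p -> r <> q ->
  exists h, continuous_on T h /\ h r = 0 /\ h p = 1 /\ h q = 1.
Proof.
  intros [HT1 Hreg] Hp Hq.
  destruct (Hreg (fun y => y = p \/ y = q) r) as [h [Hh [_ [Hr Hpq]]]]; [|tauto|].
  - apply (open_ext (fun y => ~ y = p /\ ~ y = q)); [intros y; tauto|].
    apply open_inter; [apply HT1 | apply HT1].
  - exists h. repeat split; auto.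
Qed.

Lemma third_point (p q : X) : card_gt2 X -> exists r, r <> p /\ r <> q.
Proof.
  intros [a [b [c [Hab [Hac Hbc]]]]].
  destruct (classic (a = p \/ a = q)) as [Ha|Ha]; [|exists a; tauto].
  destruct (classic (b = p \/ b = q)) as [Hb|Hb]; [|exists b; tauto].
  exists c. split; intros ->; destruct Ha, Hb; congruence.
Qed.

Lemma nonisolated_cozero (f : X -> R) p :
  continuous_on T f -> ~ isolated_point T p -> f p <> 0 -> exists p', p' <> p /\ f p' <> 0.
Proof.
  intros Hf Hp Hfp. apply NNPP. intros Hno. apply Hp.
  apply (open_ext (fun y => f y <> 0)); [|apply (Hf (fun t => t <> 0))].
  - intros y. split; [|intros ->; exact Hfp].
    intros Hy. apply NNPP. intros Hyp. apply Hno. eauto.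
  - intros y Hy. exists (Rabs y). split; [apply Rabs_pos_lt, Hy|].
    intros z Hz ->. rewrite Rminus_0_l, Rabs_Ropp in Hz. lra.
Qed.

(* With h r = 0 and h p = h q = 1 for a third point r, the ideal J of functions vanishing
   where h <= 1/3 is a vertex with members nonzero at p (so IJ <> 0) and at q, where I
   vanishes (so J <> I). *)
Lemma far_vertex_card_gt2 (I : (X -> R) -> Prop) :
  tychonoff T -> card_gt2 X -> AG_vertex T I ->
  exists J, AG_vertex T J /\ ~ ideal_eq I J /\ ~ prod_zero I J.
Proof.
  intros Hty Hgt2 HI.
  destruct (vertex_vanishes_somewhere I HI) as [q Hq].
  destruct HI as [[_ [f [Hf [p Hfp]]]] _].
  destruct (third_point p q Hgt2) as [r [Hrp Hrq]].
  destruct (tychonoff_separate r p q Hty Hrp Hrq) as [h [Hh [Hhr [Hhp Hhq]]]].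
  set (G := fun x => h x + - / 3).
  assert (HG : continuous_on T G) by (apply continuous_plus; [exact Hh | apply continuous_const]).
  pose proof (vanish_ideal_pos_part G HG) as Hpos.
  exists (vanish_ideal G). split; [|split].
  - apply (vanish_ideal_vertex G p r HG); unfold G; lra.
  - apply (ideal_neq_witness I _ _ q Hq Hpos).
    rewrite pos_part_pos; unfold G; lra.
  - intros HIJ. pose proof (prod_zero_pointwise _ _ _ _ HIJ Hf Hpos p) as Hzero. cbv beta in Hzero.
    rewrite pos_part_pos in Hzero by (unfold G; lra). unfold G in Hzero. rewrite Hhp in Hzero.
    apply Hfp. nra.
Qed.

(* Here p is not isolated, so f is nonzero at some p' <> p; the ideal J of functions
   vanishing where f^2 h >= c (with h p' = 0, h p = 1) contains functions nonzero at p' and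
   at q, while any L with I L = 0 = L J vanishes both where f <> 0 and where f^2 h < c. *)
Lemma far_vertex_no_isolated (I : (X -> R) -> Prop) :
  tychonoff T -> (forall x, ~ isolated_point T x) -> AG_vertex T I ->
  exists J, AG_vertex T J /\ ~ ideal_eq I J /\ ~ prod_zero I J /\
    forall L, nonzero_ideal T L -> prod_zero I L -> prod_zero L J -> False.
Proof.
  intros Hty Hniso HI.
  destruct (vertex_vanishes_somewhere I HI) as [q Hq].
  destruct HI as [[HIid [f [Hf [p Hfp]]]] _].
  pose proof (ideal_continuous I f HIid Hf) as Hfc.
  destruct (nonisolated_cozero f p Hfc (Hniso p) Hfp) as [p' [Hp'p Hfp']].
  destruct (tychonoff_separate p' p p Hty Hp'p Hp'p) as [h [Hh [Hhp' [Hhp _]]]].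
  set (c := f p * f p / 2).
  assert (Hc : 0 < c) by (unfold c; pose proof (Rsqr_pos_lt _ Hfp); unfold Rsqr in *; lra).
  set (G := fun x => c + - (f x * f x * h x)).
  assert (HG : continuous_on T G).
  { apply continuous_plus; [apply continuous_const|].
    apply (continuous_comp Ropp); [reg|]. repeat apply continuous_mult; assumption. }
  assert (HGp : G p = - c) by (unfold G, c; rewrite Hhp; field).
  assert (HGp' : G p' = c) by (unfold G; rewrite Hhp'; ring).
  assert (HGq : G q = c) by (unfold G; rewrite (Hq f Hf); ring).
  pose proof (vanish_ideal_pos_part G HG) as Hpos.
  exists (vanish_ideal G). split; [|split; [|split]].
  - apply (vanish_ideal_vertex G p' p HG); lra.
  - apply (ideal_neq_witness I _ _ q Hq Hpos). rewrite pos_part_pos; lra.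
  - intros HIJ. pose proof (prod_zero_pointwise _ _ _ _ HIJ Hf Hpos p') as Hzero. cbv beta in Hzero.
    rewrite pos_part_pos, HGp' in Hzero by lra. apply Hfp'. nra.
  - intros L [_ [l [Hl [y Hly]]]] HIL HLJ.
    destruct (Rle_dec (G y) 0) as [HGy|HGy].
    + pose proof (prod_zero_pointwise _ _ _ _ HIL Hf Hl y).
      assert (f y <> 0) by (intros Hfy; unfold G in HGy; rewrite Hfy in HGy; lra).
      apply Hly. nra.
    + pose proof (prod_zero_pointwise _ _ _ _ HLJ Hl Hpos y) as Hzero. cbv beta in Hzero.
      rewrite pos_part_pos in Hzero by lra. apply Hly. nra.
Qed.

Lemma two_point_isolated a b :
  T1 T -> a <> b -> (forall x, x = a \/ x = b) -> isolated_point T a.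
Proof.
  intros HT1 Hab Hall. apply (open_ext (fun y => ~ y = b)); [|apply HT1].
  intros y. destruct (Hall y) as [-> | ->]; split; congruence.
Qed.

Lemma two_point_vertex_cases a b (J : (X -> R) -> Prop) :
  (forall x, x = a \/ x = b) -> AG_vertex T J ->
  ideal_eq J (point_ideal a) \/ ideal_eq J (point_ideal b).
Proof.
  intros Hall HJ.
  destruct (vertex_vanishes_somewhere J HJ) as [y Hy].
  destruct HJ as [[HJid [f [Hf [x Hfx]]]] _].
  assert (Hxy : x <> y) by (intros ->; exact (Hfx (Hy f Hf))).
  assert (Hoff : forall g z, J g -> z <> x -> g z = 0).
  { intros g z Hg Hz. replace z with y; [exact (Hy g Hg)|].
    destruct (Hall x), (Hall y), (Hall z); congruence. }
  destruct (Hall x) as [-> | ->]; [left | right]; exact (point_ideal_unique J _ f HJid Hf Hfx Hoff).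
Qed.

(* The only vertices are the two point ideals, and they are adjacent. *)
Lemma AG_rad_two_points : tychonoff T -> card_eq2 X -> AG_rad T 1.
Proof.
  intros [HT1 _] [a [b [Hab Hall]]].
  assert (Hba : b <> a) by congruence.
  assert (Hall' : forall x, x = b \/ x = a) by (intros x; destruct (Hall x); tauto).
  pose proof (point_ideal_vertex a b HT1 (two_point_isolated a b HT1 Hab Hall) Hba) as Ha.
  pose proof (point_ideal_vertex b a HT1 (two_point_isolated b a HT1 Hba Hall') Hab) as Hb.
  assert (Hadj : prod_zero (point_ideal a) (point_ideal b)).
  { apply prod_zero_of_pointwise. intros u v Hu Hv y. apply point_idealP in Hu, Hv.
    destruct (Hall y) as [-> | ->]; [rewrite (proj2 Hv a Hab) | rewrite (proj2 Hu b Hba)]; ring. }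
  pose proof (prod_zero_neq _ _ (proj1 Ha) Hadj) as Hneq.
  apply AG_rad_intro.
  - exists (point_ideal a). split; [exact Ha|]. intros J HJ.
    destruct (two_point_vertex_cases a b J Hall HJ) as [HJa|HJb].
    + exists 0%nat. split; [lia|]. split; [exact Ha | exact (ideal_eq_sym _ _ HJa)].
    + exists 1%nat. split; [lia|]. apply (walk_step 0 _ _ J Ha Hb Hadj).
      split; [exact Hb | exact (ideal_eq_sym _ _ HJb)].
  - intros I HI. destruct (two_point_vertex_cases a b I Hall HI) as [HIa|HIb].
    + exists (point_ideal b). split; [exact Hb|]. intros [|m] Hm; [intros [_ HIb] | lia].
      exact (Hneq (ideal_eq_trans _ _ _ (ideal_eq_sym _ _ HIa) HIb)).
    + exists (point_ideal a). split; [exact Ha|]. intros [|m] Hm; [intros [_ HIa] | lia].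
      exact (Hneq (ideal_eq_trans _ _ _ (ideal_eq_sym _ _ HIa) HIb)).
Qed.

End AnnihilatingIdealGraph.

Theorem mainTheorem12 (X : Type) (T : topology X) :
  tychonoff T -> (exists a b : X, a <> b) ->
  (card_eq2 X -> AG_rad T 1) /\
  (card_gt2 X -> (exists x, isolated_point T x) -> AG_rad T 2) /\
  (card_gt2 X -> (forall x, ~ isolated_point T x) -> AG_rad T 3).
Proof.
  intros Hty [a [b Hab]]. split; [|split].
  - apply AG_rad_two_points, Hty.
  - intros Hgt2 [x0 Hiso].
    assert (Hb : exists b', b' <> x0) by (destruct (classic (a = x0)) as [->|]; eauto).
    destruct Hb as [b' Hb'].
    apply AG_rad_intro.
    + exists (point_ideal T x0). split; [exact (point_ideal_vertex T x0 b' (proj1 Hty) Hiso Hb')|].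
      intros J. exact (walk_le2_point_ideal T x0 b' J (proj1 Hty) Hiso Hb').
    + intros I HI. destruct (far_vertex_card_gt2 T I Hty Hgt2 HI) as [J [HJ [Hneq Hnz]]].
      exists J. split; [exact HJ | exact (no_short_walk_lt2 T I J Hneq Hnz)].
  - intros Hgt2 Hniso. apply AG_rad_intro.
    + destruct (tychonoff_separate T a b b Hty Hab Hab) as [h [Hh [Ha [Hb _]]]].
      assert (HI0 : AG_vertex T (vanish_ideal T (fun x => h x + - / 2))).
      { apply (vanish_ideal_vertex T _ b a); [|lra|lra].
        apply continuous_plus; [exact Hh | apply continuous_const]. }
      exists (vanish_ideal T (fun x => h x + - / 2)). split; [exact HI0|].
      intros J. exact (walk_le3 T _ J HI0).
    + intros I HI. destruct (far_vertex_no_isolated T I Hty Hniso HI) as [J [HJ [Hneq [Hnz Hfar]]]].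
      exists J. split; [exact HJ | exact (no_short_walk_lt3 T I J Hneq Hnz Hfar)].
Qed.
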